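(* For all $r,s\in\mathbb{N}$ and all $a\in(0,1]$, $$\bar c_{2rs}(E(a,1))\le\bar c_{2r}(E(a,1)),$$ where $\bar c_k:=c_k^{\mathrm{EH}}/\bigl(\bigl[\tfrac{k+1}2\bigr]\pi\bigr)$ is the normalized $k$-th Ekeland–Hofer capacity on ellipsoids in $\mathbb{R}^4$.
   Context: $E(a_1,a_2)=\{z\in\mathbb{C}^2:|z_1|^2/a_1+|z_2|^2/a_2<1\}$. Ekeland–Hofer capacities on ellipsoids: writing the numbers $j a_i\pi$ ($j\in\mathbb{N}$, $i=1,2$) in increasing order with repetitions as $d_1\le d_2\le\dots$, $c_k^{\mathrm{EH}}(E(a_1,a_2))=d_k$. $[x]$ is the largest integer $\le x$. *)

From mathcomp Require Import all_boot all_order all_algebra.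
From mathcomp Require Import reals trigo.
Set Implicit Arguments. Unset Strict Implicit. Unset Printing Implicit Defensive.
Import Order.TTheory GRing.Theory Num.Theory.
Local Open Scope ring_scope.

Section EH.
Variable R : realType.

(* The first k multiples j*a_i*pi (j = 1..k) for i = 1, 2.  The k smallest
   elements (with repetitions) of the full multiset {j a_i pi : j >= 1, i=1,2}
   all occur among these (since a_i > 0), so sorting this finite list and
   taking its k-th entry gives d_k. *)
Definition EH_list (a1 a2 : R) (k : nat) : seq R :=
  [seq j%:R * a1 * pi | j <- iota 1 k] ++ [seq j%:R * a2 * pi | j <- iota 1 k].

Definition cEH (a1 a2 : R) (k : nat) : R :=
  nth 0 (sort <=%R (EH_list a1 a2 k)) k.-1.

Definition cEHbar (a1 a2 : R) (k : nat) : R :=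
  cEH a1 a2 k / (((k.+1)./2)%:R * pi).

End EH.

(* If d_k <= t, at least k of the numbers j a_i pi are <= t; each such j a_i pi
   yields the s numbers j' a_i pi with (j-1)s < j' <= js, all <= s t.  Hence at
   least ks of them are <= s t, i.e. d_(ks) <= s d_k.  For k = 2r the
   normalizing factors are r pi and rs pi, so the factor s cancels. *)

From mathcomp Require Import all_boot all_order all_algebra.
From mathcomp Require Import reals trigo.
From mathcomp Require Import zify.
Set Implicit Arguments.
Unset Strict Implicit.
Unset Printing Implicit Defensive.

Import Order.TTheory GRing.Theory Num.Theory.
Local Open Scope ring_scope.

Lemma nth_sort_le (d : Order.disp_t) (T : orderType d) (x0 x : T) (s : seq T)
    (i : nat) :
  (i < size s)%N ->
  (nth x0 (sort <=%O s) i <= x)%O = (i < count (<= x)%O s)%N.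
Proof.
move=> lt_i_s; rewrite -(count_sort <=%O); apply/idP/idP; last first.
  exact: nth_count_le (sort_le_sorted s).
apply: contraTT; rewrite -ltNge -leqNgt => le_count_i.
by apply: nth_count_gt (sort_le_sorted s) _; rewrite le_count_i size_sort.
Qed.

Section Multiples.
Variable R : numDomainType.

Definition multiples (c : R) (k : nat) : seq R := [seq j%:R * c | j <- iota 1 k].

Lemma count_multiples_scale (c x : R) (s k : nat) : 0 <= c ->
  (s * count (<= x)%O (multiples c k)
     <= count (<= (s%:R * x)%R)%O (multiples c (k * s)))%N.
Proof.
move=> c_ge0; elim: k => [|k IH]; first by rewrite muln0.
rewrite /multiples mulSnr -[k.+1]addn1 !iotaD !map_cat !count_cat mulnDr.
apply: leq_add => //=; rewrite addn0.
have [le_kc_x|] := boolP ((1 + k)%:R * c <= x); last by rewrite muln0.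
rewrite muln1 (@eq_in_count _ _ predT) ?count_predT ?size_map ?size_iota //.
move=> z /mapP[j]; rewrite mem_iota => /andP[_ lt_j] ->.
have le_j : (j <= (1 + k) * s)%N by move: lt_j; rewrite mulnDl mul1n; lia.
apply: (le_trans (y := ((1 + k) * s)%:R * c)); first by rewrite ler_wpM2r ?ler_nat.
by rewrite mulnC natrM -mulrA ler_wpM2l.
Qed.

End Multiples.

Section EkelandHofer.
Variable R : realType.

Lemma EH_listE (a1 a2 : R) (k : nat) :
  EH_list a1 a2 k = multiples (a1 * pi) k ++ multiples (a2 * pi) k.
Proof. by congr (_ ++ _); apply: eq_map => j; rewrite mulrA. Qed.

Lemma size_EH_list (a1 a2 : R) (k : nat) : size (EH_list a1 a2 k) = (k + k)%N.
Proof. by rewrite size_cat !size_map size_iota. Qed.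

Lemma cEH_le_count (a1 a2 x : R) (k : nat) : (0 < k)%N ->
  (cEH a1 a2 k <= x) = (k <= count (<= x)%O (EH_list a1 a2 k))%N.
Proof.
move=> k_gt0; rewrite /cEH nth_sort_le ?prednK // size_EH_list; lia.
Qed.

Lemma cEH_mul_le (a1 a2 : R) (k s : nat) :
  0 <= a1 -> 0 <= a2 -> (0 < k)%N -> (0 < s)%N ->
  cEH a1 a2 (k * s) <= s%:R * cEH a1 a2 k.
Proof.
move=> a1_ge0 a2_ge0 k_gt0 s_gt0.
have := lexx (cEH a1 a2 k); rewrite cEH_le_count // => k_le_count.
rewrite cEH_le_count ?muln_gt0 ?k_gt0 //.
apply: leq_trans (leq_mul k_le_count (leqnn s)) _.
rewrite mulnC !EH_listE !count_cat mulnDr.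
by apply: leq_add; apply: count_multiples_scale; rewrite mulr_ge0 ?pi_ge0.
Qed.

Lemma cEHbar_double (a1 a2 : R) (n : nat) :
  cEHbar a1 a2 n.*2 = cEH a1 a2 n.*2 / (n%:R * pi).
Proof. by rewrite /cEHbar -[n.*2.+1./2]/(uphalf n.*2) uphalf_double. Qed.

End EkelandHofer.

Theorem mainTheorem7 (R : realType) (r s : nat) (a : R) :
  (0 < r)%N -> (0 < s)%N -> 0 < a -> a <= 1 ->
  cEHbar a 1 (2 * r * s) <= cEHbar a 1 (2 * r).
Proof.
move=> r_gt0 s_gt0 a_gt0 _.
rewrite -mulnA !mul2n !cEHbar_double doubleMl.
have r2_gt0 : (0 < r.*2)%N by rewrite double_gt0.
apply: le_trans (ler_wpM2r _ (cEH_mul_le (ltW a_gt0) ler01 r2_gt0 s_gt0)) _.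
  by rewrite invr_ge0 mulr_ge0 ?pi_ge0.
have s_neq0 : s%:R != 0 :> R by rewrite pnatr_eq0 -lt0n.
rewrite natrM [r%:R * s%:R]mulrC -[s%:R * r%:R * pi]mulrA invfM mulrACA.
by rewrite divff ?mul1r ?lexx.
Qed.
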